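(* Fix $t>1$ and let $(g_{n,t})_{n\ge0}$ be defined by $g_{0,t}=1$, $g_{n,t}=n\,g_{n-1,t}^{\,t}$ $(n\ge1)$, and let $\sigma_t=\prod_{n=1}^\infty n^{1/t^n}$. Then as $n\to\infty$, $$g_{n,t}=\sigma_t^{\,t^n}n^{-1/(t-1)}\left[1+\frac{t}{(1-t)^2n}-\frac{t(t^2-t-1)}{2(1-t)^4n^2}+\frac{t(2t^4+t^3-11t^2+7t+2)}{6(1-t)^6n^3}+O\!\left(\frac1{n^4}\right)\right]^{-1}.$$ *)

From Stdlib Require Import Reals Lra.
From Coquelicot Require Import Coquelicot.
Open Scope R_scope.

Fixpoint g (t : R) (n : nat) : R :=
  match n with
  | O => 1
  | S m => INR (S m) * Rpower (g t m) t
  end.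

Fixpoint sigma_partial (t : R) (N : nat) : R :=
  match N with
  | O => 1
  | S m => sigma_partial t m * Rpower (INR (S m)) (/ t ^ (S m))
  end.

Definition sigma_t (t : R) : R := real (Lim_seq (sigma_partial t)).

(* the bracketed polynomial correction in 1/n (without the leading 1) *)
Definition corr (t : R) (n : nat) : R :=
  let x := INR n in
  t / ((1 - t) ^ 2 * x)
  - t * (t ^ 2 - t - 1) / (2 * (1 - t) ^ 4 * x ^ 2)
  + t * (2 * t ^ 4 + t ^ 3 - 11 * t ^ 2 + 7 * t + 2) / (6 * (1 - t) ^ 6 * x ^ 3).

From Stdlib Require Import Reals Lra Lia.
From Coquelicot Require Import Coquelicot.
Open Scope R_scope.

(* Taking logarithms, ln g_n = t^n ln s_n with s_n the n-th partial product, so the ratio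
   sigma_t^(t^n) n^(-1/(t-1)) / g_n is exp u_n with u_n = t^n (ln sigma_t - ln s_n) - ln n / (t-1).
   The sequence u_n obeys u_n - u_(n+1)/t = ln (1 + 1/n) / (t-1) and u_n / t^n -> 0.  A cubic P
   in 1/n solves this recursion up to O(n^-4), so the remainder r_n = u_n - P(1/n) satisfies
   r_n - r_(n+1)/t = O(n^-4) and r_n / t^n -> 0; unrolling the recursion forward gives
   r_n = O(n^-4).  Since P is also the cubic part of ln (1 + corr), exp u_n = 1 + corr + O(n^-4). *)

Lemma pow4_abs x : Rabs x ^ 4 = x ^ 4.
Proof. replace 4%nat with (2 * 2)%nat by reflexivity. rewrite !pow_mult, pow2_abs. reflexivity. Qed.

Definition ln1p_cubic (y : R) := y - y ^ 2 / 2 + y ^ 3 / 3.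

Lemma ln1p_cubic_error y : - / 2 <= y -> Rabs (ln (1 + y) - ln1p_cubic y) <= 2 * y ^ 4.
Proof.
  intro hy.
  set (f := fun z => ln (1 + z) - ln1p_cubic z).
  destruct (MVT_abs f (fun z => - (z ^ 3 / (1 + z))) 0 y) as [c [hf hc]].
  { intros c hc. assert (- / 2 <= c) by (unfold Rmin in hc; destruct Rle_dec; lra).
    apply is_derive_Reals. unfold f, ln1p_cubic. auto_derive; [lra|]. field. lra. }
  assert (hcy : - / 2 <= c /\ Rabs c <= Rabs y).
  { unfold Rmin, Rmax in hc. unfold Rabs.
    destruct Rle_dec, Rcase_abs, Rcase_abs; lra. }
  replace (ln (1 + y) - ln1p_cubic y) with (f y - f 0)
    by (unfold f, ln1p_cubic; cbv beta; rewrite Rplus_0_r, ln_1; field).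
  rewrite hf, Rminus_0_r, Rabs_Ropp, Rabs_div, (Rabs_right (1 + c)), <- RPow_abs by lra.
  assert (hc3 : Rabs c ^ 3 <= Rabs y ^ 3) by (apply pow_incr; split; [apply Rabs_pos | lra]).
  rewrite <- pow4_abs. replace (Rabs y ^ 4) with (Rabs y ^ 3 * Rabs y) by ring.
  assert (0 <= Rabs c ^ 3) by (apply pow_le, Rabs_pos).
  assert (Rabs c ^ 3 / (1 + c) <= 2 * Rabs c ^ 3).
  { apply Rle_div_l; [lra|]. nra. }
  pose proof (Rabs_pos y). nra.
Qed.

Lemma exp_sub_1_le d : Rabs d <= / 2 -> Rabs (exp d - 1) <= 2 * Rabs d.
Proof.
  intro hd. apply Rabs_le_between in hd.
  pose proof (exp_ineq1_le d). pose proof (exp_ineq1_le (- d)).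
  assert (exp d * exp (- d) = 1) by (rewrite <- exp_plus, Rplus_opp_r; apply exp_0).
  pose proof (exp_pos d).
  assert (exp d * (1 - d) <= 1) by nra.
  apply Rabs_le_between. unfold Rabs. destruct Rcase_abs; split; nra.
Qed.

Lemma Rabs_add_le a b A B : Rabs a <= A -> Rabs b <= B -> Rabs (a + b) <= A + B.
Proof. intros; eapply Rle_trans; [apply Rabs_triang | lra]. Qed.

Lemma Rabs_sub_le a b A B : Rabs a <= A -> Rabs b <= B -> Rabs (a - b) <= A + B.
Proof. intros; eapply Rle_trans; [apply Rabs_triang | rewrite Rabs_Ropp; lra]. Qed.

Lemma Rabs_opp_le a A : Rabs a <= A -> Rabs (- a) <= A.
Proof. rewrite Rabs_Ropp; auto. Qed.

Lemma Rabs_mul_le a b A B : Rabs a <= A -> Rabs b <= B -> Rabs (a * b) <= A * B.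
Proof.
  intros. rewrite Rabs_mult.
  apply Rmult_le_compat; auto using Rabs_pos.
Qed.

Lemma Rabs_pow_le a n A : Rabs a <= A -> Rabs (a ^ n) <= A ^ n.
Proof. intros. rewrite <- RPow_abs. apply pow_incr. split; auto using Rabs_pos. Qed.

(* Proves [Rabs e <= ?K] for a polynomial expression [e], building [?K] structurally: atoms are
   bounded by a hypothesis [Rabs x <= _] or by their own absolute value. *)
Ltac bound_Rabs := first
  [ eapply Rabs_add_le; [bound_Rabs | bound_Rabs]
  | eapply Rabs_sub_le; [bound_Rabs | bound_Rabs]
  | eapply Rabs_opp_le; bound_Rabs
  | eapply Rabs_mul_le; [bound_Rabs | bound_Rabs]
  | eapply Rabs_pow_le; bound_Rabs
  | eassumption
  | apply Rle_refl ].

Lemma Rabs_inv_INR_le_1 n : Rabs (/ INR n) <= 1.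
Proof.
  destruct n as [|n]; [simpl; rewrite Rinv_0, Rabs_R0; lra|].
  assert (1 <= INR (S n)) by (apply (le_INR 1); lia).
  rewrite Rabs_right by (apply Rle_ge, Rlt_le, Rinv_0_lt_compat; lra).
  rewrite <- Rinv_1. apply Rinv_le_contravar; lra.
Qed.

Lemma eventually_div_pow_le K k eps : 0 < eps -> (1 <= k)%nat ->
  eventually (fun n => (1 <= n)%nat /\ K / INR n ^ k <= eps).
Proof.
  intros heps hk. destruct (INR_archimed eps K heps) as [N hN].
  exists (S N). intros n hn. split; [lia|].
  assert (hNn : INR N <= INR n) by (apply le_INR; lia).
  assert (hn1 : 1 <= INR n) by (apply (le_INR 1); lia).
  assert (hpow : INR n <= INR n ^ k) by (rewrite <- (pow_1 (INR n)) at 1; apply Rle_pow; lia || lra).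
  apply Rle_div_l; [apply pow_lt; lra | nra].
Qed.

Section BackwardRecursion.

Variables (t : R) (a b : nat -> R) (m0 : nat).
Hypothesis ht : 1 < t.
Hypothesis hb : forall m, (m0 <= m)%nat -> 0 <= b (S m) <= b m.
Hypothesis hstep : forall m, (m0 <= m)%nat -> Rabs (a m - a (S m) / t) <= b m.

Lemma backward_recursion_unroll J m : (m0 <= m)%nat ->
  Rabs (a m) <= t / (t - 1) * b m + Rabs (a (m + J)%nat) / t ^ J.
Proof.
  revert m. induction J as [|J IH]; intros m hm.
  - rewrite Nat.add_0_r, pow_O, Rdiv_1_r.
    assert (0 <= b m) by (pose proof (hb m hm); lra).
    assert (0 <= t / (t - 1)) by (apply Rlt_le, Rdiv_lt_0_compat; lra).
    nra.
  - assert (hone : Rabs (a m) <= b m + Rabs (a (S m)) / t).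
    { replace (a m) with ((a m - a (S m) / t) + a (S m) / t) at 1 by ring.
      eapply Rle_trans; [apply Rabs_triang|].
      unfold Rdiv at 2.
      rewrite Rabs_mult, (Rabs_right (/ t)) by (apply Rle_ge, Rlt_le, Rinv_0_lt_compat; lra).
      pose proof (hstep m hm). unfold Rdiv. lra. }
    pose proof (IH (S m) ltac:(lia)) as hrest.
    replace (S m + J)%nat with (m + S J)%nat in hrest by lia.
    pose proof (hb m hm).
    assert (hdiv : Rabs (a (S m)) / t
                   <= (t / (t - 1) * b m + Rabs (a (m + S J)%nat) / t ^ J) / t).
    { unfold Rdiv at 1 3. apply Rmult_le_compat_r; [apply Rlt_le, Rinv_0_lt_compat; lra|].
      eapply Rle_trans; [exact hrest|]. apply Rplus_le_compat_r, Rmult_le_compat_l; [|lra].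
      apply Rlt_le, Rdiv_lt_0_compat; lra. }
    assert (heq : b m + (t / (t - 1) * b m + Rabs (a (m + S J)%nat) / t ^ J) / t
                  = t / (t - 1) * b m + Rabs (a (m + S J)%nat) / t ^ S J).
    { simpl pow. field. repeat split; try apply pow_nonzero; lra. }
    lra.
Qed.

Lemma backward_recursion_bound :
  is_lim_seq (fun k => a k / t ^ k) 0 ->
  forall m, (m0 <= m)%nat -> Rabs (a m) <= t / (t - 1) * b m.
Proof.
  intros ha m hm.
  assert (htail : is_lim_seq (fun J => Rabs (a (m + J)%nat) / t ^ J) 0).
  { apply is_lim_seq_ext with (fun J => t ^ m * Rabs (a (J + m)%nat / t ^ (J + m))).
    { intro J. rewrite Rabs_div, (Rabs_right (t ^ (J + m))), Nat.add_comm, pow_add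
        by (try apply pow_nonzero; try apply Rle_ge, pow_le; lra).
      field. split; apply pow_nonzero; lra. }
    replace 0 with (t ^ m * 0) by ring.
    apply is_lim_seq_mult'; [apply is_lim_seq_const|]. apply (proj1 (is_lim_seq_abs_0 _)).
    exact (proj1 (is_lim_seq_incr_n _ m 0) ha). }
  pose proof (is_lim_seq_le _ _ (Rabs (a m)) (t / (t - 1) * b m + 0)
                (fun J => backward_recursion_unroll J m hm) (is_lim_seq_const _)
                (is_lim_seq_plus' _ _ _ _ (is_lim_seq_const _) htail)) as hle.
  simpl in hle. lra.
Qed.

End BackwardRecursion.

Lemma ln_mul_Rpower a b y : 0 < a -> ln (a * Rpower b y) = ln a + y * ln b.
Proof.
  intro ha. unfold Rpower. rewrite ln_mult, ln_exp; [reflexivity | exact ha | apply exp_pos].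
Qed.

Lemma g_pos t n : 0 < g t n.
Proof.
  induction n as [|n IH]; cbn [g]; [lra|].
  apply Rmult_lt_0_compat; [apply lt_0_INR; lia | apply exp_pos].
Qed.

Lemma sigma_partial_pos t n : 0 < sigma_partial t n.
Proof.
  induction n as [|n IH]; cbn [sigma_partial]; [lra|].
  apply Rmult_lt_0_compat; [exact IH | apply exp_pos].
Qed.

Lemma ln_g_S t n : ln (g t (S n)) = ln (INR (S n)) + t * ln (g t n).
Proof. apply ln_mul_Rpower, lt_0_INR; lia. Qed.

Lemma ln_sigma_partial_S t n :
  ln (sigma_partial t (S n)) = ln (sigma_partial t n) + / t ^ S n * ln (INR (S n)).
Proof. apply ln_mul_Rpower, sigma_partial_pos. Qed.

Lemma ln_g t n : 1 < t -> ln (g t n) = t ^ n * ln (sigma_partial t n).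
Proof.
  intro ht. induction n as [|n IH].
  - simpl. rewrite ln_1. ring.
  - rewrite ln_g_S, IH, ln_sigma_partial_S. simpl pow.
    field; repeat split; try apply pow_nonzero; lra.
Qed.

(* The second summand F n satisfies F n - F (n + 1) = (n + 1) / t ^ (n + 1) >= ln (n + 1) / t ^ (n + 1),
   so the bound telescopes. *)
Lemma ln_sigma_partial_le t n : 1 < t ->
  ln (sigma_partial t n) + (INR n + t / (t - 1)) / ((t - 1) * t ^ n) <= t / (t - 1) ^ 2.
Proof.
  intro ht. induction n as [|n IH].
  - simpl. rewrite ln_1. apply Req_le. field. lra.
  - assert (hln : ln (INR (S n)) <= INR (S n)).
    { pose proof (exp_ineq1_le (ln (INR (S n)))) as hexp.
      rewrite exp_ln in hexp by (apply lt_0_INR; lia). lra. }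
    assert (htn : 0 < / t ^ S n) by (apply Rinv_0_lt_compat, pow_lt; lra).
    assert (hF : (INR n + t / (t - 1)) / ((t - 1) * t ^ n)
                 = / t ^ S n * INR (S n) + (INR (S n) + t / (t - 1)) / ((t - 1) * t ^ S n)).
    { rewrite S_INR. simpl pow. field; repeat split; try apply pow_nonzero; lra. }
    rewrite ln_sigma_partial_S. nra.
Qed.

Lemma sigma_partial_le_S t n : 1 < t -> sigma_partial t n <= sigma_partial t (S n).
Proof.
  intro ht. cbn [sigma_partial].
  rewrite <- (Rmult_1_r (sigma_partial t n)) at 1.
  apply Rmult_le_compat_l; [apply Rlt_le, sigma_partial_pos|].
  assert (0 <= / t ^ S n * ln (INR (S n))).
  { apply Rmult_le_pos; [apply Rlt_le, Rinv_0_lt_compat, pow_lt; lra|].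
    rewrite <- ln_1. apply ln_le; [lra | apply (le_INR 1); lia]. }
  pose proof (exp_ineq1_le (/ t ^ S n * ln (INR (S n)))). unfold Rpower. lra.
Qed.

Lemma sigma_t_spec t : 1 < t -> 0 < sigma_t t /\ is_lim_seq (sigma_partial t) (sigma_t t).
Proof.
  intro ht.
  destruct (ex_finite_lim_seq_incr (sigma_partial t) (exp (t / (t - 1) ^ 2))) as [l hl].
  - intro n. apply sigma_partial_le_S, ht.
  - intro n. rewrite <- (exp_ln (sigma_partial t n)) by apply sigma_partial_pos.
    apply Rlt_le, exp_increasing.
    assert (0 < (INR n + t / (t - 1)) / ((t - 1) * t ^ n)).
    { pose proof (pos_INR n). apply Rdiv_lt_0_compat.
      - assert (0 < t / (t - 1)) by (apply Rdiv_lt_0_compat; lra). lra.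
      - apply Rmult_lt_0_compat; [lra | apply pow_lt; lra]. }
    pose proof (ln_sigma_partial_le t n ht). lra.
  - assert (hs : sigma_t t = l) by (unfold sigma_t; rewrite (is_lim_seq_unique _ _ hl); reflexivity).
    rewrite hs. split; [|exact hl].
    assert (h1 : forall n, 1 <= sigma_partial t n).
    { induction n as [|n IH]; [simpl; lra|].
      eapply Rle_trans; [exact IH | apply sigma_partial_le_S, ht]. }
    pose proof (is_lim_seq_le _ _ 1 l h1 (is_lim_seq_const 1) hl) as hle. simpl in hle. lra.
Qed.

Lemma ln_sigma_partial_cvg t : 1 < t ->
  is_lim_seq (fun n => ln (sigma_partial t n)) (ln (sigma_t t)).
Proof.
  intro ht. destruct (sigma_t_spec t ht) as [hpos hlim].
  apply is_lim_seq_continuous; [|exact hlim].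
  apply continuity_pt_filterlim, continuous_ln, hpos.
Qed.

Definition log_ratio t n :=
  t ^ n * (ln (sigma_t t) - ln (sigma_partial t n)) - ln (INR n) / (t - 1).

Lemma log_ratio_spec t n : 1 < t ->
  Rpower (sigma_t t) (t ^ n) * Rpower (INR n) (- / (t - 1)) = exp (log_ratio t n) * g t n.
Proof.
  intro ht. rewrite <- (exp_ln (g t n)) by apply g_pos.
  rewrite ln_g by lra. unfold Rpower, log_ratio. rewrite <- !exp_plus.
  f_equal. field. lra.
Qed.

Lemma log_ratio_rec t n : 1 < t -> (1 <= n)%nat ->
  log_ratio t n - log_ratio t (S n) / t = ln (1 + / INR n) / (t - 1).
Proof.
  intros ht hn. unfold log_ratio. rewrite ln_sigma_partial_S.
  assert (0 < INR n) by (apply lt_0_INR; lia).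
  replace (1 + / INR n) with (INR (S n) * / INR n) by (rewrite S_INR; field; lra).
  rewrite ln_mult, ln_Rinv; [| lra | apply lt_0_INR; lia | apply Rinv_0_lt_compat; lra].
  simpl pow. field. repeat split; try apply pow_nonzero; lra.
Qed.

(* [ln n / t ^ n] is the increment of the convergent sequence [ln (sigma_partial t n)]. *)
Lemma log_ratio_div_pow_cvg t : 1 < t -> is_lim_seq (fun n => log_ratio t n / t ^ n) 0.
Proof.
  intro ht. pose proof (ln_sigma_partial_cvg t ht) as hL.
  assert (hln : is_lim_seq (fun n => ln (INR n) / t ^ n) 0).
  { apply is_lim_seq_incr_1.
    apply is_lim_seq_ext with (fun n => ln (sigma_partial t (S n)) - ln (sigma_partial t n)).
    { intro n. rewrite ln_sigma_partial_S. field. apply pow_nonzero. lra. }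
    replace 0 with (ln (sigma_t t) - ln (sigma_t t)) by ring.
    apply is_lim_seq_minus'; [exact (proj1 (is_lim_seq_incr_1 _ _) hL) | exact hL]. }
  apply is_lim_seq_ext with
    (fun n => (ln (sigma_t t) - ln (sigma_partial t n)) - ln (INR n) / t ^ n * / (t - 1)).
  { intro n. unfold log_ratio. field. split; [lra | apply pow_nonzero; lra]. }
  replace 0 with ((ln (sigma_t t) - ln (sigma_t t)) - 0 * / (t - 1)) by ring.
  apply is_lim_seq_minus'.
  - apply is_lim_seq_minus'; [apply is_lim_seq_const | exact hL].
  - apply is_lim_seq_scal_r with (a := / (t - 1)) in hln. exact hln.
Qed.

Definition corr_c1 t := t / (1 - t) ^ 2.
Definition corr_c2 t := - (t * (t ^ 2 - t - 1) / (2 * (1 - t) ^ 4)).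
Definition corr_c3 t := t * (2 * t ^ 4 + t ^ 3 - 11 * t ^ 2 + 7 * t + 2) / (6 * (1 - t) ^ 6).
Definition corr_poly t x := corr_c1 t * x + corr_c2 t * x ^ 2 + corr_c3 t * x ^ 3.

Lemma corr_corr_poly t n : 1 < t -> (1 <= n)%nat -> corr t n = corr_poly t (/ INR n).
Proof.
  intros ht hn. assert (0 < INR n) by (apply lt_0_INR; lia).
  unfold corr, corr_poly, corr_c1, corr_c2, corr_c3. field. repeat split; lra.
Qed.

(* [log_poly t] is both the cubic part of [ln (1 + corr_poly t x)] and the cubic solution of
   [P x - P (x / (1 + x)) / t = ln (1 + x) / (t - 1)] up to O(x^4); requiring the second
   determines [log_poly], and the first then determines the coefficients of [corr]. *)
Definition log_c2 t := corr_c2 t - corr_c1 t ^ 2 / 2.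
Definition log_c3 t := corr_c3 t - corr_c1 t * corr_c2 t + corr_c1 t ^ 3 / 3.
Definition log_poly t x := corr_c1 t * x + log_c2 t * x ^ 2 + log_c3 t * x ^ 3.

Definition trunc_rem t x :=
  let a := corr_c1 t in let b := corr_c2 t in let c := corr_c3 t in
  - (b ^ 2 + 2 * a * c) / 2 - b * c * x - c ^ 2 * x ^ 2 / 2
  + (3 * a ^ 2 * b + (3 * a ^ 2 * c + 3 * a * b ^ 2) * x + (b ^ 3 + 6 * a * b * c) * x ^ 2
     + (3 * a * c ^ 2 + 3 * b ^ 2 * c) * x ^ 3 + 3 * b * c ^ 2 * x ^ 4 + c ^ 3 * x ^ 5) / 3.

Lemma ln1p_cubic_corr_poly t x :
  ln1p_cubic (corr_poly t x) - log_poly t x = x ^ 4 * trunc_rem t x.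
Proof. unfold ln1p_cubic, corr_poly, log_poly, trunc_rem, log_c2, log_c3. field. Qed.

Definition rec_rem t x :=
  (/ 2 + x / 2 + x ^ 2 / 3) / (t - 1) - (corr_c1 t + 3 * log_c2 t + 3 * log_c3 t)
  - (log_c2 t + 3 * log_c3 t) * x - log_c3 t * x ^ 2.

Lemma log_poly_functional_eq t x : 1 < t -> 0 <= x ->
  ln1p_cubic x / (t - 1) + log_poly t (x / (1 + x)) / t - log_poly t x
  = x ^ 4 * rec_rem t x / (1 + x) ^ 3.
Proof.
  intros ht hx. unfold ln1p_cubic, log_poly, rec_rem, log_c2, log_c3, corr_c1, corr_c2, corr_c3.
  field. repeat split; lra.
Qed.

Lemma corr_poly_le t : exists K, forall x, Rabs x <= 1 -> Rabs (corr_poly t x) <= K * Rabs x.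
Proof.
  eexists. intros x hx.
  replace (corr_poly t x) with ((corr_c1 t + corr_c2 t * x + corr_c3 t * x ^ 2) * x)
    by (unfold corr_poly; ring).
  rewrite Rabs_mult. apply Rmult_le_compat_r; [apply Rabs_pos | bound_Rabs].
Qed.

Lemma log_poly_bounded t : exists K, forall x, Rabs x <= 1 -> Rabs (log_poly t x) <= K.
Proof. eexists. intros x hx. unfold log_poly. bound_Rabs. Qed.

Lemma trunc_rem_bounded t : exists K, forall x, Rabs x <= 1 -> Rabs (trunc_rem t x) <= K.
Proof. eexists. intros x hx. unfold trunc_rem. cbv zeta. unfold Rdiv. bound_Rabs. Qed.

Lemma rec_rem_bounded t : exists K, forall x, Rabs x <= 1 -> Rabs (rec_rem t x) <= K.
Proof. eexists. intros x hx. unfold rec_rem, Rdiv. bound_Rabs. Qed.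

Definition log_ratio_rem t n := log_ratio t n - log_poly t (/ INR n).

Lemma log_ratio_rem_step t : 1 < t -> exists K, 0 <= K /\
  forall m, (1 <= m)%nat -> Rabs (log_ratio_rem t m - log_ratio_rem t (S m) / t) <= K / INR m ^ 4.
Proof.
  intro ht. destruct (rec_rem_bounded t) as [KV hKV].
  assert (hKV0 : 0 <= KV) by (pose proof (hKV 0 ltac:(rewrite Rabs_R0; lra)); pose proof (Rabs_pos (rec_rem t 0)); lra).
  assert (ht1 : 0 < / (t - 1)) by (apply Rinv_0_lt_compat; lra).
  exists (2 / (t - 1) + KV). split; [unfold Rdiv; lra|].
  intros m hm. assert (hm0 : 0 < INR m) by (apply lt_0_INR; lia).
  set (x := / INR m).
  assert (hx : 0 < x <= 1).
  { pose proof (Rabs_inv_INR_le_1 m) as h1. fold x in h1.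
    assert (0 < x) by (apply Rinv_0_lt_compat; lra).
    rewrite Rabs_right in h1 by lra. lra. }
  assert (hS : / INR (S m) = x / (1 + x)) by (unfold x; rewrite S_INR; field; lra).
  assert (E : log_ratio_rem t m - log_ratio_rem t (S m) / t
              = (ln (1 + x) - ln1p_cubic x) / (t - 1) + x ^ 4 * rec_rem t x / (1 + x) ^ 3).
  { rewrite <- log_poly_functional_eq by lra.
    unfold log_ratio_rem. rewrite hS. fold x.
    replace ((log_ratio t (S m) - log_poly t (x / (1 + x))) / t)
      with (log_ratio t (S m) / t - log_poly t (x / (1 + x)) / t) by (field; lra).
    pose proof (log_ratio_rec t m ht hm) as hrec. fold x in hrec.
    replace ((ln (1 + x) - ln1p_cubic x) / (t - 1))
      with (ln (1 + x) / (t - 1) - ln1p_cubic x / (t - 1)) by (field; lra).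
    lra. }
  rewrite E. replace ((2 / (t - 1) + KV) / INR m ^ 4) with (2 * x ^ 4 * / (t - 1) + x ^ 4 * KV)
    by (unfold x; rewrite pow_inv; field; lra).
  apply Rabs_add_le.
  - unfold Rdiv. rewrite Rabs_mult, (Rabs_right (/ (t - 1))) by lra.
    apply Rmult_le_compat_r; [lra|]. apply ln1p_cubic_error. lra.
  - assert (h1 : 1 <= (1 + x) ^ 3) by (apply pow_R1_Rle; lra).
    assert (hv : Rabs (rec_rem t x) <= KV) by (apply hKV; rewrite Rabs_right; lra).
    assert (h4 : 0 < x ^ 4) by (apply pow_lt; lra).
    unfold Rdiv. rewrite !Rabs_mult, Rabs_inv, !Rabs_right by (apply Rle_ge; lra).
    pose proof (Rmult_le_compat_l _ _ _ (Rlt_le _ _ h4) hv).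
    assert (0 < / (1 + x) ^ 3 <= 1).
    { split; [apply Rinv_0_lt_compat; lra|]. rewrite <- Rinv_1. apply Rinv_le_contravar; lra. }
    rewrite (Rabs_right ((1 + x) ^ 3)) by lra.
    assert (0 <= x ^ 4 * Rabs (rec_rem t x)) by (apply Rmult_le_pos; [lra | apply Rabs_pos]).
    nra.
Qed.

Lemma log_ratio_rem_div_pow_cvg t : 1 < t ->
  is_lim_seq (fun n => log_ratio_rem t n / t ^ n) 0.
Proof.
  intro ht. destruct (log_poly_bounded t) as [KP hKP].
  assert (hq : Rabs (/ t) < 1).
  { rewrite Rabs_right by (apply Rle_ge, Rlt_le, Rinv_0_lt_compat; lra).
    rewrite <- Rinv_1. apply Rinv_lt_contravar; lra. }
  assert (hP : is_lim_seq (fun n => log_poly t (/ INR n) / t ^ n) 0).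
  { apply is_lim_seq_abs_0.
    apply is_lim_seq_le_le with (fun _ => 0) (fun n => KP * (/ t) ^ n).
    - intro n. split; [apply Rabs_pos|].
      rewrite Rabs_div, (Rabs_right (t ^ n)), pow_inv by (try apply Rle_ge, pow_le; try apply pow_nonzero; lra).
      apply Rmult_le_compat_r; [apply Rlt_le, Rinv_0_lt_compat, pow_lt; lra|].
      apply hKP, Rabs_inv_INR_le_1.
    - apply is_lim_seq_const.
    - replace 0 with (KP * 0) by ring. apply is_lim_seq_mult'; [apply is_lim_seq_const|].
      apply is_lim_seq_geom, hq. }
  apply is_lim_seq_ext with (fun n => log_ratio t n / t ^ n - log_poly t (/ INR n) / t ^ n).
  { intro n. unfold log_ratio_rem. field. apply pow_nonzero. lra. }
  replace 0 with (0 - 0) by ring.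
  apply is_lim_seq_minus'; [apply log_ratio_div_pow_cvg, ht | exact hP].
Qed.

Lemma log_ratio_rem_le t : 1 < t ->
  exists A, forall n, (1 <= n)%nat -> Rabs (log_ratio_rem t n) <= A / INR n ^ 4.
Proof.
  intro ht. destruct (log_ratio_rem_step t ht) as [K [hK hstep]].
  exists (t / (t - 1) * K). intros n hn.
  replace (t / (t - 1) * K / INR n ^ 4) with (t / (t - 1) * (K / INR n ^ 4)) by (unfold Rdiv; ring).
  apply (backward_recursion_bound t _ (fun m => K / INR m ^ 4) 1%nat ht);
    [| exact hstep | apply log_ratio_rem_div_pow_cvg, ht | exact hn].
  intros m hm. assert (0 < INR m) by (apply lt_0_INR; lia).
  assert (0 < INR m ^ 4) by (apply pow_lt; lra).
  assert (INR m ^ 4 <= INR (S m) ^ 4) by (apply pow_incr; split; [lra | apply le_INR; lia]).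
  split.
  - apply Rmult_le_pos; [lra | apply Rlt_le, Rinv_0_lt_compat; lra].
  - apply Rmult_le_compat_l; [lra|]. apply Rinv_le_contravar; lra.
Qed.

Lemma ln_one_plus_corr_approx t : 1 < t -> exists K, eventually (fun n =>
  Rabs (corr t n) <= / 2 /\ Rabs (ln (1 + corr t n) - log_poly t (/ INR n)) <= K / INR n ^ 4).
Proof.
  intro ht. destruct (corr_poly_le t) as [Kc hKc]. destruct (trunc_rem_bounded t) as [KW hKW].
  exists (2 * Kc ^ 4 + KW).
  apply filter_imp with (2 := eventually_div_pow_le Kc 1 (/ 2) ltac:(lra) (le_n 1)).
  intros n [hn hsmall]. rewrite pow_1 in hsmall. unfold Rdiv in hsmall.
  assert (hx : Rabs (/ INR n) <= 1) by apply Rabs_inv_INR_le_1.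
  assert (hn0 : 0 < INR n) by (apply lt_0_INR; lia).
  set (x := / INR n) in *.
  assert (hx0 : 0 < x) by (apply Rinv_0_lt_compat; lra).
  rewrite Rabs_right in hx by lra.
  rewrite corr_corr_poly by (lra || lia). fold x.
  set (c := corr_poly t x).
  assert (hc : Rabs c <= Kc * x).
  { rewrite <- (Rabs_right x) by lra. apply hKc. rewrite Rabs_right; lra. }
  split; [lra|].
  replace (ln (1 + c) - log_poly t x) with ((ln (1 + c) - ln1p_cubic c) + x ^ 4 * trunc_rem t x)
    by (unfold c; rewrite <- ln1p_cubic_corr_poly; ring).
  replace ((2 * Kc ^ 4 + KW) / INR n ^ 4) with (2 * (Kc * x) ^ 4 + x ^ 4 * KW)
    by (unfold x; field; lra).
  apply Rabs_add_le.
  - eapply Rle_trans; [apply ln1p_cubic_error|].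
    + apply Rabs_le_between in hc. lra.
    + apply Rmult_le_compat_l; [lra|]. rewrite <- pow4_abs. apply pow_incr. split; [apply Rabs_pos | exact hc].
  - rewrite Rabs_mult, (Rabs_right (x ^ 4)) by (apply Rle_ge, pow_le; lra).
    apply Rmult_le_compat_l; [apply pow_le; lra|]. apply hKW. rewrite Rabs_right; lra.
Qed.

Lemma exp_log_ratio_sub_corr t : 1 < t -> exists C, eventually (fun n =>
  Rabs (exp (log_ratio t n) - 1 - corr t n) <= C / INR n ^ 4).
Proof.
  intro ht. destruct (log_ratio_rem_le t ht) as [A hA].
  destruct (ln_one_plus_corr_approx t ht) as [K hK].
  exists (3 * (A + K)).
  apply filter_imp with (2 := filter_and _ _ hK
                                (eventually_div_pow_le (A + K) 4 (/ 2) ltac:(lra) ltac:(lia))).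
  intros n [[hc hl] [hn hsmall]].
  set (c := corr t n) in *.
  set (d := log_ratio t n - ln (1 + c)).
  assert (hd : Rabs d <= (A + K) / INR n ^ 4).
  { replace d with (log_ratio_rem t n - (ln (1 + c) - log_poly t (/ INR n)))
      by (unfold d, log_ratio_rem; ring).
    unfold Rdiv. rewrite Rmult_plus_distr_r. apply Rabs_sub_le; [apply hA, hn | exact hl]. }
  apply Rabs_le_between in hc.
  assert (he : exp (log_ratio t n) - 1 - c = (1 + c) * (exp d - 1)).
  { replace (log_ratio t n) with (ln (1 + c) + d) by (unfold d; ring).
    rewrite exp_plus, exp_ln by lra. ring. }
  rewrite he, Rabs_mult, (Rabs_right (1 + c)) by lra.
  pose proof (exp_sub_1_le d ltac:(lra)). pose proof (Rabs_pos (exp d - 1)).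
  unfold Rdiv in *. nra.
Qed.

Theorem theorem22 (t : R) (ht : 1 < t) :
  exists (C : R) (N : nat), forall n : nat, (N <= n)%nat ->
    exists e : R, Rabs e <= C / INR n ^ 4 /\
      g t n = Rpower (sigma_t t) (t ^ n) * Rpower (INR n) (- / (t - 1))
              * / (1 + corr t n + e).
Proof.
  destruct (exp_log_ratio_sub_corr t ht) as [C [N hN]].
  exists C, N. intros n hn.
  exists (exp (log_ratio t n) - 1 - corr t n). split; [exact (hN n hn)|].
  rewrite log_ratio_spec by exact ht.
  replace (1 + corr t n + (exp (log_ratio t n) - 1 - corr t n)) with (exp (log_ratio t n)) by ring.
  field. apply Rgt_not_eq, exp_pos.
Qed.
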